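(* In the setting of the context, for every fixed $i\in\{1,\dots,n\}$, $$\prod_{(x,y)\in\mathfrak{X}}\frac{\max\big(1,|\beta_i(x,y)-m(x,y)|\big)}{e^6s(ns)^{2s/n}\,h^{1/n}\,(2Y_S+7/2)}\le 1.$$
   Context: Setting: $n\ge3$; $F(x,y)=\sum_{i=0}^s a_ix^{n_i}y^{n-n_i}\in\mathbb{Z}[x,y]$ of degree $n$, irreducible over $\mathbb{Q}$, all $a_i\neq0$, $0=n_0<\dots<n_s=n$, discriminant $D$. $R=n^{800\log^2n}$; $h$ a positive integer and $\kappa>1$ an integer with $h\le |D|^{\frac{1}{2(n-1)(2+1/\kappa)}}/\big((3R)^{n/2}(ns)^{2s+n}\big)$; $Y_S=e^6s(ns)^{2s/n}h^{1/(\kappa n)}$. Write $F(x,y)=a\prod_{i=1}^n(x-\alpha_iy)$ ($\alpha_i$ the roots of $F(x,1)$) and $L_i(x,y)=x-\alpha_iy$. A ''solution'' is a pair $(x,y)\in\mathbb{Z}^2$ with $\gcd(x,y)=1$ and $1\le|F(x,y)|\le h$, with $(x,y)$ and $(-x,-y)$ identified. Assume there is a solution with $0\le y\le Y_S$, and fix one such, $(x_0,y_0)$, with $y_0\ge0$ minimal. Index the roots so that $|L_1(x_0,y_0)|=\min_i|L_i(x_0,y_0)|$. There is at most one solution $(x^*,y^* )$ with $0<y^*\le Y_S$ and $|L_1(x^*,y^* )|<1/(2Y_S)$; let $\mathbf{A}=\{(x_0,y_0)\}$ together with $(x^*,y^* )$ if it exists. For a primitive $(x,y)$ choose integers $x',y'$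 with $x'y-xy'=1$ and set $\beta_j(x,y)=-L_j(x',y')/L_j(x,y)$ (so that $F(ux+wx',uy+wy')=F(x,y)\prod_j(u-\beta_j(x,y)w)$), and let $m(x,y)$ be an integer with $|\mathrm{Re}\,\beta_1(x,y)-m(x,y)|\le 1/2$. For $1\le i\le n$, $\mathfrak{X}_i$ is the set of solutions $(x,y)\notin\mathbf{A}$ with $1\le y\le Y_S$ and $|L_i(x,y)|\le\frac{1}{2y}$. For each nonempty $\mathfrak{X}_i$ let $(x^{(i)},y^{(i)})$ be an element of $\mathfrak{X}_i$ with largest $y$. $\mathfrak{X}$ is the set of solutions $(x,y)\notin\mathbf{A}$ with $1\le y\le Y_S$, with all the elements $(x^{(1)},y^{(1)}),\dots,(x^{(n)},y^{(n)})$ removed. *)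

From HB Require Import structures.
From mathcomp Require Import all_boot all_order all_algebra.
From mathcomp Require Import all_classical all_reals all_analysis.
From mathcomp Require Import complex.

Set Implicit Arguments.
Unset Strict Implicit.
Unset Printing Implicit Defensive.

Import Order.TTheory GRing.Theory Num.Theory.
Local Open Scope ring_scope.

(* The binary form F(x,y) = sum_{i=0}^s a_i x^{n_i} y^{n-n_i},
   evaluated in any commutative ring T; a i = a_i, e i = n_i. *)
Definition Fval (n s : nat) (a : nat -> int) (e : nat -> nat)
    (T : comPzRingType) (x y : T) : T :=
  \sum_(i < s.+1) (a i)%:~R * x ^+ (e i) * y ^+ (n - e i).

Definition Fpoly (s : nat) (a : nat -> int) (e : nat -> nat) : {poly rat} :=
  \sum_(i < s.+1) ((a i)%:~R)%:P * 'X^(e i).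

Definition cabs (R : realType) (z : R[i]) : R := ComplexField.Normc.normc z.

Section Setting.
Variables (R : realType) (n s : nat) (a : nat -> int) (e : nat -> nat)
          (h kappa : nat) (alpha : nat -> R[i]).

(* discriminant of F : a^{2n-2} prod_{i<j} (alpha_i - alpha_j)^2,
   with a = a_s the coefficient of x^n *)
Definition discF : R[i] :=
  ((a s)%:~R) ^+ (2 * n - 2) *
  \prod_(i < n) \prod_(j < n | (i < j)%N) (alpha i - alpha j) ^+ 2.

Definition Rconst : R := powR (n%:R) (800 * (ln (n%:R)) ^+ 2).

Definition YS : R :=
  expR 6 * s%:R * powR ((n * s)%:R) (2 * s%:R / n%:R)
    * powR (h%:R) (1 / (kappa%:R * n%:R)).

(* L_j(x,y) = x - alpha_j y  (roots indexed 0..n-1; paper's L_1 is L 0) *)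
Definition Lj (j : nat) (x y : int) : R[i] := x%:~R - alpha j * y%:~R.

Definition is_sol (x y : int) : Prop :=
  gcdz x y = 1 /\ 1 <= `|Fval n s a e x y| /\ `|Fval n s a e x y| <= h%:Z.

Variables (x0 y0 : int).

Definition inA (x y : int) : Prop :=
  (x, y) = (x0, y0) \/
  (is_sol x y /\ 0 < y /\ (y%:~R : R) <= YS /\ cabs (Lj 0 x y) < 1 / (2 * YS)).

Definition inXi (i : nat) (x y : int) : Prop :=
  is_sol x y /\ ~ inA x y /\ 1 <= y /\ (y%:~R : R) <= YS /\
  cabs (Lj i x y) <= 1 / (2 * (y%:~R : R)).

Variable sel : nat -> int * int.

Definition inX (x y : int) : Prop :=
  is_sol x y /\ ~ inA x y /\ 1 <= y /\ (y%:~R : R) <= YS /\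
  ~ (exists i, (i < n)%N /\ (exists x' y', inXi i x' y') /\ sel i = (x, y)).

Variables (xp yp : int -> int -> int).

Definition beta (j : nat) (x y : int) : R[i] :=
  - Lj j (xp x y) (yp x y) / Lj j x y.

End Setting.

(* Every (x, y) in X satisfies |L_1(x, y)| >= 1/(2 Y_S), because it is not the
   exceptional solution of A, and also |L_i(x, y)| >= 1/(2 Y_S): either (x, y) is
   not in X_i, or it lies in X_i without being its top element (x^(i), y^(i)), and
   then the nonzero integer x y^(i) - x^(i) y forces |L_i(x, y)| >= 1/(2 y^(i)).
   Since beta_j(x, y) = - y'/y - 1/(y L_j(x, y)), both corrections have modulus at
   most 2 Y_S; as m(x, y) is within 1/2 of Re beta_1(x, y), this gives
   |beta_i - m| <= 4 Y_S + 1/2.  The constant e^6 s (ns)^(2s/n) h^(1/n) is at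
   least 2, so every factor of the product lies in [0, 1]. *)

From mathcomp Require Import all_boot all_order all_algebra.
From mathcomp Require Import all_classical all_reals all_analysis.
From mathcomp Require Import complex.
From mathcomp Require Import ring lra.
Set Implicit Arguments.
Unset Strict Implicit.

Import Order.TTheory GRing.Theory Num.Theory.
Local Open Scope ring_scope.

Section ComplexModulus.
Variable R : realType.
Implicit Types (z w : R[i]) (r : R).

Lemma cabs_ge0 z : 0 <= cabs z.
Proof. by case: z => u v; exact: sqrtr_ge0. Qed.

Lemma cabs0 : cabs (0 : R[i]) = 0.
Proof. exact: ComplexField.Normc.normc0. Qed.

Lemma cabsD z w : cabs (z + w) <= cabs z + cabs w.
Proof. exact: le_normcD. Qed.

Lemma cabsN z : cabs (- z) = cabs z.
Proof. exact: normcN. Qed.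

Lemma cabsM z w : cabs (z * w) = cabs z * cabs w.
Proof. exact: ComplexField.Normc.normcM. Qed.

Lemma cabsV z : cabs z^-1 = (cabs z)^-1.
Proof. exact: ComplexField.Normc.normcV. Qed.

Lemma cabs_real r : cabs r%:C%C = `|r|.
Proof. by rewrite /cabs /= expr0n /= addr0 sqrtr_sqr. Qed.

Lemma cabs_int (k : int) : cabs (k%:~R : R[i]) = `|k%:~R : R|.
Proof. by rewrite -cabs_real rmorph_int. Qed.

Lemma Re_le_cabs z : `|complex.Re z| <= cabs z.
Proof.
case: z => u v /=; rewrite -sqrtr_sqr; apply: ler_wsqrtr.
by rewrite lerDl sqr_ge0.
Qed.

Lemma cabs_sub_le_of_Re_near (c r : R) w0 w :
  `|complex.Re (c%:C%C - w0) - r| <= 1 / 2 ->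
  cabs (c%:C%C - w - r%:C%C) <= 1 / 2 + cabs w0 + cabs w.
Proof.
rewrite (_ : complex.Re _ = c - complex.Re w0); last by case: w0.
move=> near_r; rewrite addrAC -rmorphB.
apply: le_trans (cabsD _ _) _; rewrite cabsN cabs_real.
have := ler_normD (c - complex.Re w0 - r) (complex.Re w0).
have := Re_le_cabs w0; rewrite addrAC subrK; lra.
Qed.

Lemma cabs_inv_mul_le (k : int) (K : R) z :
  1 <= k -> 0 < K -> 1 / (2 * K) <= cabs z -> cabs ((k%:~R * z)^-1) <= 2 * K.
Proof.
move=> k_ge1 K_gt0 z_ge.
have kR_ge1 : 1 <= k%:~R :> R by rewrite ler1z.
have z_gt0 : 0 < cabs z by apply: lt_le_trans z_ge; rewrite mul1r invr_gt0; lra.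
rewrite cabsV cabsM cabs_int ger0_norm; last lra.
rewrite -[2 * K]invrK lef_pV2 ?posrE; last 2 first.
- by apply: mulr_gt0 => //; lra.
- by rewrite invr_gt0; lra.
move: z_ge; rewrite mul1r; nra.
Qed.

End ComplexModulus.

Lemma det_neq0_of_coprime (x y x' y' : int) :
  gcdz x' y' = 1 -> 0 < y <= y' -> (x, y) != (x', y') -> x * y' - x' * y != 0.
Proof.
move=> cop /andP[y_gt0 le_yy'] neq; apply: contra neq; rewrite subr_eq0 => /eqP eq.
have /dvdzP[k def_y] : (y' %| y)%Z.
  rewrite -(Gauss_dvdzr _ (_ : coprimez y' x')); last by rewrite /coprimez gcdzC cop.
  by rewrite -eq dvdz_mull.
have y'_gt0 : 0 < y' := lt_le_trans y_gt0 le_yy'.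
have k_ge1 : 1 <= k by rewrite -gtz0_ge1 -(pmulr_lgt0 _ y'_gt0) -def_y.
have y_eq : y = y'.
  by apply/eqP; rewrite eq_le le_yy' def_y ler_peMl // ltW.
by move: eq; rewrite y_eq => /(mulIf (lt0r_neq0 y'_gt0)) ->.
Qed.

Lemma ratio_of_unimodular (F : fieldType) (X Y X' Y' t : F) :
  X' * Y - X * Y' = 1 -> Y != 0 -> X - t * Y != 0 ->
  - (X' - t * Y') / (X - t * Y) = - (Y' / Y) - (Y * (X - t * Y))^-1.
Proof.
move=> det Y_neq0 L_neq0; rewrite -[(_ * _)^-1]mul1r -det.
by field; rewrite Y_neq0 L_neq0.
Qed.

Section LinearForms.
Variables (R : realType) (alpha : nat -> R[i]) (j : nat).
Implicit Types x y : int.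

Lemma Lj_det x y x' y' :
  ((x * y' - x' * y)%:~R : R[i]) = y'%:~R * Lj alpha j x y - y%:~R * Lj alpha j x' y'.
Proof. by rewrite /Lj intrB !intrM; ring. Qed.

Lemma beta_split (xp yp : int -> int -> int) x y :
  xp x y * y - x * yp x y = 1 -> y != 0 -> Lj alpha j x y != 0 ->
  beta alpha xp yp j x y = - ((yp x y)%:~R / y%:~R) - (y%:~R * Lj alpha j x y)^-1.
Proof.
move=> det y_neq0; apply: ratio_of_unimodular; last by rewrite intr_eq0.
by rewrite -!intrM -intrB det.
Qed.

(* The determinant [x y' - x' y] is a nonzero integer, hence of modulus at least 1. *)
Lemma Lj_gap x y x' y' :
  gcdz x' y' = 1 -> 0 < y <= y' -> (x, y) != (x', y') ->
  cabs (Lj alpha j x' y') <= 1 / (2 * y'%:~R) ->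
  1 / (2 * y'%:~R) <= cabs (Lj alpha j x y).
Proof.
move=> cop /andP[y_gt0 le_yy'] neq close'.
have det_ge1 : 1 <= `|(x * y' - x' * y)%:~R : R|.
  by rewrite -intr_norm ler1z -gtz0_ge1 normr_gt0 det_neq0_of_coprime // y_gt0.
have yR_gt0 : 0 < y%:~R :> R by rewrite ltr0z.
have le_yyR : y%:~R <= y'%:~R :> R by rewrite ler_int.
have y'R_gt0 : 0 < y'%:~R :> R := lt_le_trans yR_gt0 le_yyR.
have := cabsD (y'%:~R * Lj alpha j x y) (- (y%:~R * Lj alpha j x' y')).
rewrite -Lj_det cabs_int cabsN !cabsM !cabs_int (gtr0_norm yR_gt0) (gtr0_norm y'R_gt0).
have twoy'_gt0 : 0 < 2 * y'%:~R :> R by rewrite mulr_gt0.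
move: close'; rewrite ler_pdivlMr // ler_pdivrMr //.
have := cabs_ge0 (Lj alpha j x y); have := cabs_ge0 (Lj alpha j x' y').
nra.
Qed.

End LinearForms.

Section ExceptionalSets.
Variables (R : realType) (n s : nat) (a : nat -> int) (e : nat -> nat)
  (h kappa : nat) (alpha : nat -> R[i]) (x0 y0 : int) (sel : nat -> int * int).

Local Notation K := (YS R n s h kappa).
Local Notation inXi := (inXi n s a e h kappa alpha x0 y0).
Local Notation inX := (inX n s a e h kappa alpha x0 y0 sel).

Hypothesis sel_top : forall j, (j < n)%N -> (exists x y, inXi j x y) ->
  inXi j (sel j).1 (sel j).2 /\ (forall x y, inXi j x y -> y <= (sel j).2).

Lemma inX_Lj_ge j x y : (j < n)%N -> inX x y -> 1 / (2 * K) <= cabs (Lj alpha j x y).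
Proof.
move=> lt_jn [sol [notA [y_ge1 [le_yK not_sel]]]].
have yR_gt0 : 0 < y%:~R :> R by rewrite ltr0z (lt_le_trans ltr01).
have inv_le (Y : R) : 0 < Y -> Y <= K -> 1 / (2 * K) <= 1 / (2 * Y).
  by move=> Y_gt0 le_YK; rewrite !mul1r lef_pV2 ?posrE; lra.
have [Xj | notXj] := pselect (inXi j x y); last first.
  apply: le_trans (inv_le _ yR_gt0 le_yK) _.
  rewrite leNgt; apply/negP => /ltW close.
  exact: notXj (conj sol (conj notA (conj y_ge1 (conj le_yK close)))).
move: (sel_top lt_jn (ex_intro _ x (ex_intro _ y Xj))).
case def_sel: (sel j) => [x' y'] /= [[sol' [_ [y'_ge1 [le_y'K close']]]] top].
have y'R_gt0 : 0 < y'%:~R :> R by rewrite ltr0z (lt_le_trans ltr01).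
apply: le_trans (inv_le _ y'R_gt0 le_y'K) (Lj_gap _ _ _ close').
- exact: sol'.1.
- by rewrite (lt_le_trans ltr01) // (top x y Xj).
- apply/eqP => eq_xy; apply: not_sel; exists j.
  by split => //; split; [exists x, y | rewrite def_sel eq_xy].
Qed.

Variables (xp yp m : int -> int -> int).
Hypothesis xp_det : forall x y, gcdz x y = 1 -> xp x y * y - x * yp x y = 1.
Hypothesis m_near : forall x y, gcdz x y = 1 ->
  `|complex.Re (beta alpha xp yp 0 x y) - (m x y)%:~R| <= 1 / 2 :> R.

Lemma inX_beta_sub_m_le j x y : (0 < n)%N -> (j < n)%N -> inX x y ->
  cabs (beta alpha xp yp j x y - (m x y)%:~R) <= 4 * K + 1 / 2.
Proof.
move=> n_gt0 lt_jn Xxy; have [[cop _] [_ [y_ge1 [le_yK _]]]] := Xxy.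
have y_gt0 : 0 < y := lt_le_trans ltr01 y_ge1.
have K_gt0 : 0 < K by apply: lt_le_trans le_yK; rewrite ltr0z.
have L_ge k : (k < n)%N -> 1 / (2 * K) <= cabs (Lj alpha k x y).
  by move=> lt_kn; apply: inX_Lj_ge.
have L_neq0 k : (k < n)%N -> Lj alpha k x y != 0.
  move=> lt_kn; apply/eqP => L0; have := L_ge _ lt_kn.
  by rewrite L0 cabs0 mul1r invr_le0; lra.
have beta_k k : (k < n)%N -> beta alpha xp yp k x y =
    (- ((yp x y)%:~R / y%:~R : R))%:C%C - (y%:~R * Lj alpha k x y)^-1.
  move=> lt_kn; rewrite beta_split ?xp_det ?(lt0r_neq0 y_gt0) ?L_neq0 //.
  by rewrite rmorphN fmorph_div !rmorph_int.
have := m_near cop; rewrite beta_k //.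
move=> /(cabs_sub_le_of_Re_near (y%:~R * Lj alpha j x y)^-1).
rewrite -beta_k // rmorph_int.
have := cabs_inv_mul_le y_ge1 K_gt0 (L_ge _ lt_jn).
have := cabs_inv_mul_le y_ge1 K_gt0 (L_ge _ n_gt0).
lra.
Qed.

End ExceptionalSets.

Lemma powR_ge1 (R : realType) (b r : R) : 1 <= b -> 0 <= r -> 1 <= b `^ r.
Proof. by move=> b_ge1 r_ge0; apply: le_trans (ler_powR b_ge1 r_ge0); rewrite powRr0. Qed.

Lemma expR6_const_ge2 (R : realType) (n s h : nat) :
  (0 < n)%N -> (0 < s)%N -> (0 < h)%N ->
  2 <= expR 6 * s%:R * powR ((n * s)%:R) (2 * s%:R / n%:R) * powR (h%:R) (1 / n%:R) :> R.
Proof.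
move=> n_gt0 s_gt0 h_gt0.
have expR6_ge2 : 2 <= expR 6 :> R by apply: le_trans (expR_ge1Dx 6); lra.
apply: (le_trans expR6_ge2); rewrite -!mulrA ler_peMr ?expR_ge0 //.
by rewrite !mulr_ege1 ?ler1n ?powR_ge1 ?ler1n ?muln_gt0 ?n_gt0 ?divr_ge0 ?mulr_ge0.
Qed.

Lemma max1_ratio_bounds (R : realFieldType) (b C K : R) :
  2 <= C -> 1 <= K -> b <= 4 * K + 1 / 2 ->
  0 <= Num.max 1 b / (C * (2 * K + 7 / 2)) <= 1.
Proof.
move=> C_ge2 K_ge1 b_le.
have den_gt0 : 0 < C * (2 * K + 7 / 2) by apply: mulr_gt0; lra.
apply/andP; split; first by apply: divr_ge0 (ltW den_gt0); rewrite le_max ler01.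
by rewrite ler_pdivrMr // mul1r ge_max; apply/andP; split; nra.
Qed.

Theorem lemma4p5
  (R : realType) (n s : nat) (a : nat -> int) (e : nat -> nat)
  (h kappa : nat) (alpha : nat -> R[i])
  (x0 y0 : int) (sel : nat -> int * int) (xp yp m : int -> int -> int)
  (i : nat) (S : seq (int * int)) :
  (* setting: the form F *)
  (3 <= n)%N ->
  e 0%N = 0%N ->
  (forall k, (k < s)%N -> (e k < e k.+1)%N) ->
  e s = n ->
  (forall k, (k <= s)%N -> a k != 0) ->
  irreducible_poly (Fpoly s a e) ->
  (* alpha_1..alpha_n (here alpha 0 .. alpha (n-1)) are the roots of F(x,1) *)
  (forall z : R[i], Fval n s a e z 1 = (a s)%:~R * \prod_(j < n) (z - alpha j)) ->
  (* h, kappa *)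
  (0 < h)%N -> (1 < kappa)%N ->
  (h%:R : R) <=
    powR (cabs (discF n s a alpha))
         (1 / (2 * (n - 1)%:R * (2 + 1 / kappa%:R)))
    / (powR (3 * Rconst R n) (n%:R / 2) * ((n * s) ^ (2 * s + n))%:R) ->
  (* (x0,y0): a solution with 0 <= y0 <= Y_S and y0 minimal *)
  is_sol n s a e h x0 y0 -> 0 <= y0 -> (y0%:~R : R) <= YS R n s h kappa ->
  (forall x y, is_sol n s a e h x y -> 0 <= y -> (y%:~R : R) <= YS R n s h kappa ->
     y0 <= y) ->
  (* indexing of the roots: |L_1(x0,y0)| minimal *)
  (forall j, (j < n)%N -> cabs (Lj alpha 0 x0 y0) <= cabs (Lj alpha j x0 y0)) ->
  (* choice of (x^(j), y^(j)) : an element of frak X_j with largest y *)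
  (forall j, (j < n)%N -> (exists x y, inXi n s a e h kappa alpha x0 y0 j x y) ->
     inXi n s a e h kappa alpha x0 y0 j (sel j).1 (sel j).2 /\
     (forall x y, inXi n s a e h kappa alpha x0 y0 j x y -> y <= (sel j).2)) ->
  (* choice of x', y' with x'y - xy' = 1, and of m(x,y) *)
  (forall x y, gcdz x y = 1 -> xp x y * y - x * yp x y = 1) ->
  (forall x y, gcdz x y = 1 ->
     `|complex.Re (beta alpha xp yp 0 x y) - (m x y)%:~R| <= 1 / 2 :> R) ->
  (* the fixed index i and an enumeration S of the finite set frak X *)
  (i < n)%N ->
  uniq S ->
  (forall x y, (x, y) \in S <-> inX n s a e h kappa alpha x0 y0 sel x y) ->
  \prod_(p <- S)
     (Num.max 1 (cabs (beta alpha xp yp i p.1 p.2 - (m p.1 p.2)%:~R))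
      / (expR 6 * s%:R * powR ((n * s)%:R) (2 * s%:R / n%:R)
         * powR (h%:R) (1 / n%:R) * (2 * YS R n s h kappa + 7 / 2)))
  <= 1.
Proof.
move=> n_ge3 e0 _ es _ _ _ h_gt0 _ _ _ _ _ _ _ sel_top xp_det m_near lt_in _ memS.
have n_gt0 : (0 < n)%N by apply: leq_trans n_ge3.
have s_gt0 : (0 < s)%N by rewrite lt0n; apply: contraTneq n_ge3 => s0; rewrite -es s0 e0.
have C_ge2 := expR6_const_ge2 R n_gt0 s_gt0 h_gt0.
rewrite big_seq; apply: prodr_ile1 => -[x y] /memS Xxy /=.
have [_ [_ [y_ge1 [le_yK _]]]] := Xxy.
have K_ge1 : 1 <= YS R n s h kappa by apply: le_trans le_yK; rewrite ler1z.
apply: max1_ratio_bounds C_ge2 K_ge1 _.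
exact: (inX_beta_sub_m_le sel_top xp_det m_near n_gt0 lt_in Xxy).
Qed.
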